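(* For every $n\ge1$ and $\epsilon>0$ there is a quantum algorithm that $\epsilon$-tests the Pauli group $\mathcal{P}_n$ using $O(1/\epsilon^2)$ queries to $U$, with implied constant independent of $n$ and $\epsilon$.
   Context: $n\ge1$, $N=2^n$. Pauli matrices $\sigma_0=I,\sigma_1=X,\sigma_2=Y,\sigma_3=Z$; for $\vec{x}\in\mathbb{Z}_4^n$, $\sigma_{\vec{x}}=\sigma_{x_1}\otimes\cdots\otimes\sigma_{x_n}$. $\mathcal{P}_n=\{i^k\sigma_{\vec{x}}: k\in\{0,1,2,3\},\vec{x}\in\mathbb{Z}_4^n\}$. $\|A\|=\sqrt{\mathrm{tr}(A^\dagger A)}$; $D(A,B)=\min_{\theta\in[0,2\pi)}\frac{1}{\sqrt{2N}}\|e^{i\theta}A-B\|$; $D(A,\mathcal{S})=\inf_{B\in\mathcal{S}}D(A,B)$. For $\mathcal{S}\subseteq\mathbb{U}_N$ (the $N\times N$ unitaries), $U$ has property $\mathcal{S}$ if $U=e^{i\theta}V$ for some $V\in\mathcal{S}$, real $\theta$; $U$ is $\epsilon$-far from $\mathcal{S}$ if $D(U,V)\ge\epsilon$ for all $V\in\mathcal{S}$. Testing model: the unknown $U\in\mathbb{U}_N$ is a black box; the algorithm may prepare arbitrary states on the system plus an ancilla, apply $U\otimes I$ (one query each), interleaved with arbitrary fixed quantum operations, and measure. It $\epsilon$-tests $\mathcal{S}$ if for every $U\in\mathbb{U}_N$ it accepts with probability $\ge2/3$ when $U$ has property $\mathcal{S}$ and with probability $\le1/3$ when $U$ is $\epsilon$-far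 from $\mathcal{S}$. *)

(* complex numbers are built by hand as pairs of Stdlib reals,
   matrices as functions nat -> nat -> C read on an explicit index range. *)
From Stdlib Require Import Reals Lra Lia List.
Open Scope R_scope.

Definition C : Type := (R * R)%type.
Definition RtoC (r : R) : C := (r, 0).
Definition C0 : C := (0, 0).
Definition C1 : C := (1, 0).
Definition Ci : C := (0, 1).
Definition Cadd (z w : C) : C := (fst z + fst w, snd z + snd w).
Definition Copp (z : C) : C := (- fst z, - snd z).
Definition Csub (z w : C) : C := Cadd z (Copp w).
Definition Cmul (z w : C) : C :=
  (fst z * fst w - snd z * snd w, fst z * snd w + snd z * fst w).
Definition Cconj (z : C) : C := (fst z, - snd z).
Definition Cmod2 (z : C) : R := fst z * fst z + snd z * snd z.
Definition Cexpi (theta : R) : C := (cos theta, sin theta).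
Fixpoint Cpow (z : C) (k : nat) : C :=
  match k with O => C1 | S k' => Cmul z (Cpow z k') end.

Fixpoint Csum (n : nat) (f : nat -> C) : C :=
  match n with O => C0 | S n' => Cadd (Csum n' f) (f n') end.
Fixpoint Rsum (n : nat) (f : nat -> R) : R :=
  match n with O => 0 | S n' => Rsum n' f + f n' end.

Definition Vec : Type := nat -> C.
Definition Mat : Type := nat -> nat -> C.

Definition Mid : Mat := fun i j => if Nat.eqb i j then C1 else C0.
Definition Mscale (z : C) (A : Mat) : Mat := fun i j => Cmul z (A i j).
Definition Msub (A B : Mat) : Mat := fun i j => Csub (A i j) (B i j).
Definition Madj (A : Mat) : Mat := fun i j => Cconj (A j i).
Definition Mmul (d : nat) (A B : Mat) : Mat :=
  fun i j => Csum d (fun k => Cmul (A i k) (B k j)).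
Definition Mapply (d : nat) (A : Mat) (v : Vec) : Vec :=
  fun i => Csum d (fun k => Cmul (A i k) (v k)).
Definition kron (dB : nat) (A B : Mat) : Mat :=
  fun i j => Cmul (A (i / dB)%nat (j / dB)%nat) (B (i mod dB)%nat (j mod dB)%nat).

Definition unitary (d : nat) (U : Mat) : Prop :=
  forall i j, (i < d)%nat -> (j < d)%nat -> Mmul d (Madj U) U i j = Mid i j.

Definition frob (d : nat) (A : Mat) : R :=
  sqrt (Rsum d (fun i => Rsum d (fun j => Cmod2 (A i j)))).

Definition vnorm2 (d : nat) (v : Vec) : R := Rsum d (fun i => Cmod2 (v i)).

Definition Meq (d : nat) (A B : Mat) : Prop :=
  forall i j, (i < d)%nat -> (j < d)%nat -> A i j = B i j.

Definition sigma (a : nat) : Mat :=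
  fun i j =>
    match a with
    | 0%nat => if Nat.eqb i j then C1 else C0
    | 1%nat => if Nat.eqb i j then C0 else C1
    | 2%nat => if Nat.eqb i j then C0
               else if Nat.eqb i 0 then Copp Ci else Ci
    | _ => if Nat.eqb i j then (if Nat.eqb i 0 then C1 else Copp C1)
           else C0
    end.

Fixpoint pauli_tensor (x : list nat) : Mat :=
  match x with
  | nil => Mid
  | a :: l => kron (2 ^ length l) (sigma a) (pauli_tensor l)
  end.

Definition z4vec (n : nat) (x : list nat) : Prop :=
  length x = n /\ Forall (fun a => (a < 4)%nat) x.

Definition in_pauli_group (n : nat) (P : Mat) : Prop :=
  exists k x, (k < 4)%nat /\ z4vec n x /\ Meq (2 ^ n) P (Mscale (Cpow Ci k) (pauli_tensor x)).

Definition has_pauli_property (n : nat) (U : Mat) : Prop :=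
  exists theta V, in_pauli_group n V /\ Meq (2 ^ n) U (Mscale (Cexpi theta) V).

(* D(A,B) >= eps, with D(A,B) = min_theta (1/sqrt(2N)) ||e^{i theta} A - B||, N = 2^n *)
Definition dist_ge (n : nat) (A B : Mat) (eps : R) : Prop :=
  forall theta : R,
    eps <= / sqrt (2 * INR (2 ^ n)) * frob (2 ^ n) (Msub (Mscale (Cexpi theta) A) B).

Definition eps_far_pauli (n : nat) (eps : R) (U : Mat) : Prop :=
  forall V, in_pauli_group n V -> dist_ge n U V eps.

(* ---------- query algorithms ----------
   Register = system (dimension N = 2^n, most significant) (x) ancilla (dimension anc).
   The algorithm prepares psi0, applies V_0, then alternates (U (x) I) and V_k
   (k = 1..q), and finally measures in the computational basis, accepting on
   the basis states i with acc i = true. *)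
Record algorithm : Type := mkAlg {
  anc : nat;
  queries : nat;
  psi0 : Vec;
  ops : nat -> Mat;
  acc : nat -> bool
}.

Definition reg_dim (n : nat) (a : algorithm) : nat := (2 ^ n * anc a)%nat.

Definition well_formed (n : nat) (a : algorithm) : Prop :=
  (1 <= anc a)%nat /\
  vnorm2 (reg_dim n a) (psi0 a) = 1 /\
  (forall k, (k <= queries a)%nat -> unitary (reg_dim n a) (ops a k)).

Fixpoint state_after (n : nat) (a : algorithm) (U : Mat) (k : nat) : Vec :=
  let M := reg_dim n a in
  match k with
  | O => Mapply M (ops a 0) (psi0 a)
  | S k' => Mapply M (ops a k)
              (Mapply M (kron (anc a) U Mid) (state_after n a U k'))
  end.

Definition accept_prob (n : nat) (a : algorithm) (U : Mat) : R :=
  let fin := state_after n a U (queries a) in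
  Rsum (reg_dim n a) (fun i => if acc a i then Cmod2 (fin i) else 0).

Definition eps_tests_pauli (n : nat) (eps : R) (a : algorithm) : Prop :=
  forall U, unitary (2 ^ n) U ->
    (has_pauli_property n U -> 2 / 3 <= accept_prob n a U) /\
    (eps_far_pauli n eps U -> accept_prob n a U <= 1 / 3).

(* The tester is based on Bell sampling.  Querying U on half of the maximally
   entangled state |Phi> on C^N (x) C^N (N = 2^n) gives the Choi state of U;
   measuring it in the Bell basis {(P_x (x) I)|Phi>} returns the Pauli string
   x with probability p_x = |tr(P_x^+ U)|^2 / N^2, and sum_x p_x = 1.  The
   tester draws k independent samples and accepts iff they all coincide, so
   it accepts with probability sum_x p_x^k.
   - If U = e^{it} i^j P_y, then p_y = 1 and the tester always accepts.
   - Since ||e^{it} U - P_x||^2 = 2N (1 - Re(e^{it} c_x)) with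
     c_x = tr(P_x^+ U)/N, an eps-far U has p_x <= (1 - eps^2)^2 for all x,
     whence sum_x p_x^k <= (1 - eps^2)^(2(k-1)) <= 1/3 once k - 1 >= 1/eps^2
     (Bernoulli's inequality). *)

From Stdlib Require Import Reals Lra Lia List ZArith.
Open Scope R_scope.

(* Identities of complex arithmetic are polynomial identities on the two
   real components, so they are closed by [ring] componentwise. *)
Ltac cring :=
  unfold Cadd, Cmul, Copp, Csub, Cconj, C0, C1, Ci, RtoC, Cmod2 in *;
  apply injective_projections; simpl; ring.

Lemma Cadd_assoc z w u : Cadd z (Cadd w u) = Cadd (Cadd z w) u. Proof. cring. Qed.
Lemma Cadd_0_r z : Cadd z C0 = z. Proof. cring. Qed.
Lemma Cmul_comm z w : Cmul z w = Cmul w z. Proof. cring. Qed.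
Lemma Cmul_assoc z w u : Cmul z (Cmul w u) = Cmul (Cmul z w) u. Proof. cring. Qed.
Lemma Cmul_1_l z : Cmul C1 z = z. Proof. cring. Qed.
Lemma Cconj_add z w : Cconj (Cadd z w) = Cadd (Cconj z) (Cconj w). Proof. cring. Qed.
Lemma Cconj_mul z w : Cconj (Cmul z w) = Cmul (Cconj z) (Cconj w). Proof. cring. Qed.
Lemma Cconj_involutive z : Cconj (Cconj z) = z. Proof. cring. Qed.

Lemma Cmul_conj_l z : Cmul (Cconj z) z = RtoC (Cmod2 z). Proof. cring. Qed.

Lemma Cmod2_mul z w : Cmod2 (Cmul z w) = Cmod2 z * Cmod2 w.
Proof. destruct z, w; unfold Cmod2, Cmul; simpl; ring. Qed.

Lemma Cmod2_ge0 z : 0 <= Cmod2 z.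
Proof. destruct z; unfold Cmod2; simpl; nra. Qed.

Lemma Cmod2_pow z j : Cmod2 (Cpow z j) = Cmod2 z ^ j.
Proof.
  induction j; simpl.
  - unfold Cmod2, C1; simpl; ring.
  - rewrite Cmod2_mul, IHj; reflexivity.
Qed.

Lemma Cmod2_Cexpi t : Cmod2 (Cexpi t) = 1.
Proof. unfold Cmod2, Cexpi; simpl. pose proof (sin2_cos2 t). unfold Rsqr in H. lra. Qed.

Lemma Cmod2_Cpow_Ci k : Cmod2 (Cpow Ci k) = 1.
Proof. rewrite Cmod2_pow. unfold Cmod2, Ci; simpl. rewrite Rmult_0_l, Rmult_1_l, Rplus_0_l. apply pow1. Qed.

Lemma rotate_to_modulus z : exists t, fst (Cmul (Cexpi t) z) = sqrt (Cmod2 z).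
Proof.
  destruct z as [a b]. unfold Cmul, Cexpi, Cmod2; simpl.
  set (r := sqrt (a * a + b * b)).
  assert (Hr0 : 0 <= r) by apply sqrt_pos.
  assert (Hrr : r * r = a * a + b * b) by (apply sqrt_sqrt; nra).
  destruct (Req_dec r 0) as [H0 | H0].
  { exists 0. assert (a = 0) by nra. assert (b = 0) by nra. subst. rewrite H0. ring. }
  assert (Hcos : -1 <= a / r <= 1).
  { assert (a * a <= r * r) by nra.
    split; apply (Rmult_le_reg_r r); try lra; field_simplify; try lra; nra. }
  assert (Hsin : sqrt (1 - (a / r)²) = Rabs b / r).
  { replace (1 - (a / r)²) with ((Rabs b / r)²).
    - apply sqrt_Rsqr. unfold Rdiv.
      apply Rmult_le_pos; [apply Rabs_pos | left; apply Rinv_0_lt_compat; lra].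
    - unfold Rsqr.
      assert (Hbb : Rabs b * Rabs b = b * b) by (rewrite <- Rabs_mult; apply Rabs_right; nra).
      transitivity ((Rabs b * Rabs b) / (r * r)); [field; lra |].
      rewrite Hbb. replace (b * b) with (r * r - a * a) by lra. field; lra. }
  destruct (Rle_dec b 0).
  - exists (acos (a / r)). rewrite cos_acos, sin_acos, Hsin, Rabs_left1 by auto.
    apply (Rmult_eq_reg_r r); [| lra]. field_simplify; [| lra]. nra.
  - exists (- acos (a / r)).
    rewrite cos_neg, sin_neg, cos_acos, sin_acos, Hsin, Rabs_right by (auto || lra).
    apply (Rmult_eq_reg_r r); [| lra]. field_simplify; [| lra]. nra.
Qed.

Lemma Csum_ext n f g : (forall i, (i < n)%nat -> f i = g i) -> Csum n f = Csum n g.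
Proof.
  induction n; simpl; intros H; auto.
  rewrite IHn, H by (intros; try apply H; lia). reflexivity.
Qed.

Lemma Csum_add n f g : Csum n (fun i => Cadd (f i) (g i)) = Cadd (Csum n f) (Csum n g).
Proof. induction n; simpl; [cring |]. rewrite IHn. cring. Qed.

Lemma Csum_scal n c f : Csum n (fun i => Cmul c (f i)) = Cmul c (Csum n f).
Proof. induction n; simpl; [cring |]. rewrite IHn. cring. Qed.

Lemma Csum_scal_r n c f : Csum n (fun i => Cmul (f i) c) = Cmul (Csum n f) c.
Proof. induction n; simpl; [cring |]. rewrite IHn. cring. Qed.

Lemma Csum_conj n f : Cconj (Csum n f) = Csum n (fun i => Cconj (f i)).
Proof. induction n; simpl; [cring |]. rewrite Cconj_add, IHn. reflexivity. Qed.

Lemma Csum_zero n f : (forall i, (i < n)%nat -> f i = C0) -> Csum n f = C0.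
Proof. induction n; simpl; intros H; auto. rewrite IHn, H by (intros; try apply H; lia). cring. Qed.

Lemma Csum_real n g : Csum n (fun i => RtoC (g i)) = RtoC (Rsum n g).
Proof. induction n; simpl; [reflexivity |]. rewrite IHn. cring. Qed.

Lemma Csum_swap n m f :
  Csum n (fun i => Csum m (fun j => f i j)) = Csum m (fun j => Csum n (fun i => f i j)).
Proof. induction n; simpl. { rewrite Csum_zero; auto. } rewrite IHn, <- Csum_add. reflexivity. Qed.

Lemma Csum_plus m b f : Csum (m + b) f = Cadd (Csum m f) (Csum b (fun j => f (m + j)%nat)).
Proof.
  induction b; simpl.
  - rewrite Nat.add_0_r, Cadd_0_r. reflexivity.
  - rewrite Nat.add_succ_r; simpl. rewrite IHb, Cadd_assoc. reflexivity.
Qed.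

Lemma Csum_split a b f : Csum (a * b) f = Csum a (fun i => Csum b (fun j => f (i * b + j)%nat)).
Proof. induction a; simpl; auto. rewrite Nat.add_comm, Csum_plus, IHa. reflexivity. Qed.

Lemma Csum_delta n m f : (m < n)%nat -> Csum n (fun i => Cmul (Mid i m) (f i)) = f m.
Proof.
  induction n; intros H; simpl; [lia |]. unfold Mid at 2.
  destruct (Nat.eqb_spec n m).
  - subst. rewrite Csum_zero; [cring |].
    intros i Hi. unfold Mid. destruct (Nat.eqb_spec i m); [lia | cring].
  - rewrite IHn by lia. cring.
Qed.

Lemma Mid_sym i j : Mid i j = Mid j i.
Proof. unfold Mid. rewrite Nat.eqb_sym. reflexivity. Qed.

Lemma Csum_delta' n m f : (m < n)%nat -> Csum n (fun i => Cmul (Mid m i) (f i)) = f m.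
Proof. intros H. rewrite <- (Csum_delta n m f H). apply Csum_ext. intros i _. rewrite Mid_sym. reflexivity. Qed.

Lemma Csum_mul_Csum n m f g :
  Cmul (Csum n f) (Csum m g) = Csum n (fun i => Csum m (fun j => Cmul (f i) (g j))).
Proof. rewrite <- Csum_scal_r. apply Csum_ext. intros. rewrite <- Csum_scal. reflexivity. Qed.

Lemma Rsum_ext n f g : (forall i, (i < n)%nat -> f i = g i) -> Rsum n f = Rsum n g.
Proof.
  induction n; simpl; intros H; auto.
  rewrite IHn, H by (intros; try apply H; lia). reflexivity.
Qed.

Lemma Rsum_fst n f : Rsum n (fun i => fst (f i)) = fst (Csum n f).
Proof. induction n; simpl; auto. rewrite IHn. reflexivity. Qed.

Lemma Rsum_add n f g : Rsum n (fun i => f i + g i) = Rsum n f + Rsum n g.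
Proof. induction n; simpl; [ring |]. rewrite IHn. ring. Qed.

Lemma Rsum_scal n c f : Rsum n (fun i => c * f i) = c * Rsum n f.
Proof. induction n; simpl; [ring |]. rewrite IHn. ring. Qed.

Lemma Rsum_const n c : Rsum n (fun _ => c) = INR n * c.
Proof. induction n; simpl; [ring |]. rewrite IHn. destruct n; simpl; ring. Qed.

Lemma Rsum_plus m b f : Rsum (m + b) f = Rsum m f + Rsum b (fun j => f (m + j)%nat).
Proof.
  induction b; simpl.
  - rewrite Nat.add_0_r. ring.
  - rewrite Nat.add_succ_r; simpl. rewrite IHb. ring.
Qed.

Lemma Rsum_split a b f : Rsum (a * b) f = Rsum a (fun i => Rsum b (fun j => f (i * b + j)%nat)).
Proof. induction a; simpl; auto. rewrite Nat.add_comm, Rsum_plus, IHa. ring. Qed.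

Lemma Rsum_mul_Rsum n m f g : Rsum n f * Rsum m g = Rsum n (fun i => Rsum m (fun j => f i * g j)).
Proof. induction n; simpl; [ring |]. rewrite <- IHn, Rmult_plus_distr_r, Rsum_scal. reflexivity. Qed.

Lemma Rsum_delta n m g : (m < n)%nat -> Rsum n (fun i => if (i =? m)%nat then g i else 0) = g m.
Proof.
  induction n; intros H; simpl; [lia |]. destruct (Nat.eqb_spec n m).
  - subst. rewrite (Rsum_ext _ _ (fun _ => 0)), Rsum_const; [ring |].
    intros i Hi. destruct (Nat.eqb_spec i m); [lia | reflexivity].
  - rewrite IHn by lia. ring.
Qed.

Lemma Rsum_le n f g : (forall i, (i < n)%nat -> f i <= g i) -> Rsum n f <= Rsum n g.
Proof.
  induction n; simpl; intros H; [lra |].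
  apply Rplus_le_compat; [apply IHn; intros |]; apply H; lia.
Qed.

Lemma Rsum_nonneg n f : (forall i, (i < n)%nat -> 0 <= f i) -> 0 <= Rsum n f.
Proof.
  intros H. rewrite <- (Rmult_0_r (INR n)), <- Rsum_const. apply Rsum_le. exact H.
Qed.

Lemma Rsum_ge_term n f m : (m < n)%nat -> (forall i, (i < n)%nat -> 0 <= f i) -> f m <= Rsum n f.
Proof.
  induction n; intros Hm H; simpl; [lia |].
  assert (0 <= f n) by (apply H; lia).
  destruct (Nat.eq_dec m n).
  - subst. assert (0 <= Rsum n f) by (apply Rsum_nonneg; intros; apply H; lia). lra.
  - assert (f m <= Rsum n f) by (apply IHn; [lia | intros; apply H; lia]). lra.
Qed.

(* Mixed-radix index arithmetic: an index [a * B + b] with [b < B] encodes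
   the pair (a, b); this is how tensor factors are addressed. *)
Section IndexArithmetic.
Local Open Scope nat_scope.

Lemma pow_pos a n : (0 < a)%nat -> (0 < a ^ n)%nat.
Proof. intros. apply Nat.neq_0_lt_0, Nat.pow_nonzero. lia. Qed.

Lemma INR_pos N : 0 < N -> (0 < INR N)%R.
Proof. apply lt_0_INR. Qed.

Lemma mixed_div (a B b : nat) : (b < B)%nat -> ((a * B + b) / B = a)%nat.
Proof. intros. symmetry. apply (Nat.div_unique _ _ _ b); lia. Qed.

Lemma mixed_mod (a B b : nat) : (b < B)%nat -> ((a * B + b) mod B = b)%nat.
Proof. intros. symmetry. apply (Nat.mod_unique _ _ a); lia. Qed.

Lemma mod_mul_div (D L i : nat) : (0 < D)%nat -> ((i mod (D * L)) / D = (i / D) mod L)%nat.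
Proof.
  intros. rewrite Nat.Div0.mod_mul_r, Nat.mul_comm, Nat.add_comm.
  apply mixed_div, Nat.mod_upper_bound. lia.
Qed.

Lemma mod_mul_mod (D L i : nat) : (0 < D)%nat -> ((i mod (D * L)) mod D = i mod D)%nat.
Proof.
  intros. rewrite Nat.Div0.mod_mul_r, Nat.mul_comm, Nat.add_comm.
  apply mixed_mod, Nat.mod_upper_bound. lia.
Qed.

Lemma Mid_divmod (B i j : nat) : (0 < B)%nat ->
  Cmul (Mid (i / B) (j / B)) (Mid (i mod B) (j mod B)) = Mid i j.
Proof.
  intros HB. unfold Mid. destruct (Nat.eqb_spec i j).
  - subst. rewrite !Nat.eqb_refl. cring.
  - destruct (Nat.eqb_spec (i / B) (j / B)), (Nat.eqb_spec (i mod B) (j mod B)); try cring.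
    exfalso. apply n. rewrite (Nat.div_mod_eq i B), (Nat.div_mod_eq j B). lia.
Qed.

Lemma Cconj_Mid i j : Cconj (Mid i j) = Mid i j.
Proof. unfold Mid; destruct (i =? j)%nat; cring. Qed.

End IndexArithmetic.

Section Matrices.
Local Open Scope nat_scope.

Lemma Mapply_ext d A v w i :
  (forall k, (k < d)%nat -> v k = w k) -> Mapply d A v i = Mapply d A w i.
Proof. intros H. apply Csum_ext. intros. rewrite H; auto. Qed.

Lemma Mapply_mat_ext d A A' v i :
  (forall j, A i j = A' i j) -> Mapply d A v i = Mapply d A' v i.
Proof. intros H. apply Csum_ext. intros. rewrite H; auto. Qed.

Lemma Mapply_Mmul d A B v i : Mapply d (Mmul d A B) v i = Mapply d A (Mapply d B v) i.
Proof.
  unfold Mapply, Mmul.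
  transitivity (Csum d (fun k => Csum d (fun m => Cmul (A i m) (Cmul (B m k) (v k))))).
  - apply Csum_ext; intros. rewrite <- Csum_scal_r. apply Csum_ext; intros. symmetry; apply Cmul_assoc.
  - rewrite Csum_swap. apply Csum_ext; intros. rewrite <- Csum_scal. reflexivity.
Qed.

Lemma Mid_unitary d : unitary d Mid.
Proof.
  intros i j Hi Hj. unfold Mmul, Madj.
  rewrite (Csum_ext _ _ (fun m => Cmul (Mid m i) (Mid m j))) by (intros; rewrite Cconj_Mid; auto).
  rewrite Csum_delta; auto.
Qed.

Lemma unitary_Mmul d A B : unitary d A -> unitary d B -> unitary d (Mmul d A B).
Proof.
  intros HA HB i j Hi Hj.
  (* (AB)^+(AB) = B^+ (A^+ A) B, and A^+ A = I collapses the middle sum. *)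
  transitivity (Csum d (fun m => Csum d (fun l =>
                  Cmul (Cmul (Cconj (B m i)) (B l j)) (Mmul d (Madj A) A m l)))).
  - unfold Mmul, Madj.
    transitivity (Csum d (fun k => Csum d (fun m => Csum d (fun l =>
        Cmul (Cmul (Cconj (B m i)) (B l j)) (Cmul (Cconj (A k m)) (A k l)))))).
    + apply Csum_ext; intros k Hk. rewrite Csum_conj, Csum_mul_Csum.
      apply Csum_ext; intros. apply Csum_ext; intros. rewrite Cconj_mul. cring.
    + rewrite Csum_swap. apply Csum_ext; intros. rewrite Csum_swap.
      apply Csum_ext; intros. rewrite Csum_scal. reflexivity.
  - rewrite <- (HB i j Hi Hj). apply Csum_ext; intros m Hm.
    rewrite (Csum_ext _ _ (fun l => Cmul (Mid l m) (Cmul (Cconj (B m i)) (B l j))))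
      by (intros l Hl; rewrite HA, Mid_sym by auto; apply Cmul_comm).
    apply Csum_delta; auto.
Qed.

Lemma unitary_kron (dA B : nat) A : (0 < B)%nat -> unitary dA A -> unitary (dA * B) (kron B A Mid).
Proof.
  intros HB HA i j Hi Hj. unfold Mmul, Madj. rewrite Csum_split.
  assert (Hentry : forall a b k, (b < B)%nat ->
            kron B A Mid (a * B + b)%nat k = Cmul (A a (k / B)) (Mid b (k mod B)))
    by (intros; unfold kron; rewrite mixed_div, mixed_mod; auto).
  transitivity (Csum dA (fun a =>
      Cmul (Cmul (Cconj (A a (i / B))) (A a (j / B))) (Mid (i mod B) (j mod B)))).
  - apply Csum_ext; intros a Ha.
    transitivity (Csum B (fun b => Cmul (Mid b (i mod B))
                   (Cmul (Cmul (Cconj (A a (i / B))) (A a (j / B))) (Mid b (j mod B))))).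
    + apply Csum_ext; intros b Hb. rewrite !Hentry, Cconj_mul, Cconj_Mid by auto. cring.
    + apply Csum_delta, Nat.mod_upper_bound. lia.
  - rewrite Csum_scal_r.
    change (Cmul (Mmul dA (Madj A) A (i / B) (j / B)) (Mid (i mod B) (j mod B)) = Mid i j).
    rewrite HA by (apply Nat.Div0.div_lt_upper_bound; lia). apply Mid_divmod; auto.
Qed.

Lemma unitary_preserves_norm d A v : unitary d A -> vnorm2 d (Mapply d A v) = vnorm2 d v.
Proof.
  intros HA. unfold vnorm2.
  assert (Hfst : forall w, Rsum d (fun i => Cmod2 (w i)) = fst (Csum d (fun i => Cmul (Cconj (w i)) (w i)))).
  { intros w. rewrite <- Rsum_fst. apply Rsum_ext. intros. rewrite Cmul_conj_l. reflexivity. }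
  rewrite !Hfst. f_equal. unfold Mapply.
  transitivity (Csum d (fun i => Csum d (fun k => Csum d (fun l =>
      Cmul (Cmul (Cconj (v k)) (v l)) (Cmul (Cconj (A i k)) (A i l)))))).
  - apply Csum_ext; intros. rewrite Csum_conj, Csum_mul_Csum.
    apply Csum_ext; intros. apply Csum_ext; intros. rewrite Cconj_mul. cring.
  - rewrite Csum_swap. apply Csum_ext; intros k Hk. rewrite Csum_swap.
    transitivity (Csum d (fun l => Cmul (Mid l k) (Cmul (Cconj (v k)) (v l)))).
    + apply Csum_ext; intros l Hl. rewrite Csum_scal.
      change (Csum d (fun i => Cmul (Cconj (A i k)) (A i l))) with (Mmul d (Madj A) A k l).
      rewrite HA, Mid_sym by auto. apply Cmul_comm.
    + rewrite Csum_delta; auto.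
Qed.

Lemma Mapply_kron_prod (dA B : nat) A v g h (i : nat) : (0 < B)%nat ->
  (forall j, (j < dA * B)%nat -> v j = Cmul (g (j / B)%nat) (h (j mod B)%nat)) ->
  Mapply (dA * B) (kron B A Mid) v i = Cmul (Mapply dA A g (i / B)) (h (i mod B)).
Proof.
  intros HB Hv. unfold Mapply. rewrite Csum_split, <- Csum_scal_r.
  apply Csum_ext; intros a Ha.
  transitivity (Csum B (fun b => Cmul (Mid (i mod B) b) (Cmul (Cmul (A (i / B) a) (g a)) (h b)))).
  - apply Csum_ext; intros b Hb. rewrite Hv by nia. unfold kron.
    rewrite !mixed_div, !mixed_mod by auto. cring.
  - apply Csum_delta', Nat.mod_upper_bound. lia.
Qed.

Lemma kron_Mid_assoc (B N : nat) U (i j : nat) : (0 < B)%nat -> (0 < N)%nat ->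
  kron (B * N) U Mid i j = kron B (kron N U Mid) Mid i j.
Proof.
  intros. unfold kron. rewrite !Nat.Div0.div_div.
  rewrite <- (Mid_divmod B (i mod (B * N)) (j mod (B * N))) by auto.
  rewrite !mod_mul_div, !mod_mul_mod by auto. apply Cmul_assoc.
Qed.

End Matrices.

(* The 4^n Pauli strings are indexed by x < 4^n through
   the base-4 digits of x; they form an orthogonal basis of the N x N
   matrices (N = 2^n) for the Hilbert-Schmidt inner product, with
   <P_x, P_x> = N. *)
Section PauliBasis.
Local Open Scope nat_scope.

Fixpoint base4_digits (n x : nat) : list nat :=
  match n with
  | O => nil
  | S m => x / 4 ^ m :: base4_digits m (x mod 4 ^ m)
  end.

Fixpoint base4_index (l : list nat) : nat :=
  match l with
  | nil => O
  | a :: l' => a * 4 ^ length l' + base4_index l'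
  end.

Definition pauli (n x : nat) : Mat := pauli_tensor (base4_digits n x).

Lemma base4_digits_z4 n x : x < 4 ^ n -> z4vec n (base4_digits n x).
Proof.
  revert x; induction n; intros x Hx; split; simpl; auto.
  - f_equal. apply IHn, Nat.mod_upper_bound. pose proof (pow_pos 4 n ltac:(lia)). lia.
  - constructor.
    + apply Nat.Div0.div_lt_upper_bound. simpl in Hx. lia.
    + apply IHn, Nat.mod_upper_bound. pose proof (pow_pos 4 n ltac:(lia)). lia.
Qed.

Lemma base4_index_lt l : Forall (fun a => a < 4) l -> base4_index l < 4 ^ length l.
Proof. induction l; simpl; intros H; [lia |]. inversion H; subst. specialize (IHl H3). nia. Qed.

Lemma base4_digits_index l :
  Forall (fun a => a < 4) l -> base4_digits (length l) (base4_index l) = l.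
Proof.
  induction l; simpl; intros H; auto. inversion H; subst.
  rewrite mixed_div, mixed_mod, IHl by (auto using base4_index_lt). reflexivity.
Qed.

Lemma pauli_in_group n x : x < 4 ^ n -> in_pauli_group n (pauli n x).
Proof.
  intros Hx. exists 0, (base4_digits n x).
  split; [lia | split; [apply base4_digits_z4; auto |]].
  intros i j _ _. unfold Mscale. simpl. rewrite Cmul_1_l. reflexivity.
Qed.

Lemma pauli_tensor_indexed n l : z4vec n l ->
  base4_index l < 4 ^ n /\ pauli n (base4_index l) = pauli_tensor l.
Proof.
  intros [Hl H4]. subst n. split.
  - apply base4_index_lt; auto.
  - unfold pauli. rewrite base4_digits_index; auto.
Qed.

Lemma pauli_S n x i j : pauli (S n) x i j =
  Cmul (sigma (x / 4 ^ n) (i / 2 ^ n) (j / 2 ^ n))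
       (pauli n (x mod 4 ^ n) (i mod 2 ^ n) (j mod 2 ^ n)).
Proof.
  unfold pauli. simpl. unfold kron.
  replace (length (base4_digits n (x mod 4 ^ n))) with n; [reflexivity |].
  clear. generalize (x mod 4 ^ n). induction n; simpl; auto.
Qed.

Lemma qubit_complete i j k l : i < 2 -> j < 2 -> k < 2 -> l < 2 ->
  Csum 4 (fun a => Cmul (Cconj (sigma a i j)) (sigma a k l))
  = Cmul (RtoC 2) (Cmul (Mid i k) (Mid j l)).
Proof.
  intros. destruct i as [|[|]]; try lia; destruct j as [|[|]]; try lia;
  destruct k as [|[|]]; try lia; destruct l as [|[|]]; try lia;
  simpl; unfold Mid; simpl; cring.
Qed.

Lemma pauli_complete n i j k l : i < 2 ^ n -> j < 2 ^ n -> k < 2 ^ n -> l < 2 ^ n ->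
  Csum (4 ^ n) (fun x => Cmul (Cconj (pauli n x i j)) (pauli n x k l))
  = Cmul (RtoC (INR (2 ^ n))) (Cmul (Mid i k) (Mid j l)).
Proof.
  revert i j k l; induction n; intros i j k l Hi Hj Hk Hl.
  { simpl in *. replace i with 0 by lia. replace j with 0 by lia.
    replace k with 0 by lia. replace l with 0 by lia. cbv; cring. }
  pose proof (pow_pos 2 n ltac:(lia)) as H2. pose proof (pow_pos 4 n ltac:(lia)) as H4.
  change (4 ^ S n) with (4 * 4 ^ n). rewrite Csum_split.
  transitivity (Csum 4 (fun a => Csum (4 ^ n) (fun y =>
     Cmul (Cmul (Cconj (sigma a (i / 2 ^ n) (j / 2 ^ n))) (sigma a (k / 2 ^ n) (l / 2 ^ n)))
          (Cmul (Cconj (pauli n y (i mod 2 ^ n) (j mod 2 ^ n)))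
                (pauli n y (k mod 2 ^ n) (l mod 2 ^ n)))))).
  - apply Csum_ext; intros a Ha. apply Csum_ext; intros y Hy.
    rewrite !pauli_S, mixed_div, mixed_mod, Cconj_mul by auto. cring.
  - rewrite <- Csum_mul_Csum. simpl in Hi, Hj, Hk, Hl.
    rewrite qubit_complete by (apply Nat.Div0.div_lt_upper_bound; lia).
    rewrite IHn by (apply Nat.mod_upper_bound; lia).
    rewrite <- (Mid_divmod (2 ^ n) i k), <- (Mid_divmod (2 ^ n) j l) by auto.
    change (2 ^ S n) with (2 * 2 ^ n). rewrite mult_INR. simpl (INR 2). cring.
Qed.

Lemma pauli_row_norm n x i : i < 2 ^ n ->
  Rsum (2 ^ n) (fun j => Cmod2 (pauli n x i j)) = 1%R.
Proof.
  revert x i; induction n; intros x i Hi.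
  { simpl in *. replace i with 0 by lia. cbv; ring. }
  pose proof (pow_pos 2 n ltac:(lia)) as H2.
  change (2 ^ S n) with (2 * 2 ^ n). rewrite Rsum_split.
  transitivity (Rmult (Rsum 2 (fun c => Cmod2 (sigma (x / 4 ^ n) (i / 2 ^ n) c)))
                (Rsum (2 ^ n) (fun d => Cmod2 (pauli n (x mod 4 ^ n) (i mod 2 ^ n) d)))).
  - rewrite Rsum_mul_Rsum. apply Rsum_ext; intros. apply Rsum_ext; intros.
    rewrite pauli_S, Cmod2_mul, mixed_div, mixed_mod; auto.
  - rewrite IHn by (apply Nat.mod_upper_bound; lia).
    assert (i / 2 ^ n < 2) by (apply Nat.Div0.div_lt_upper_bound; simpl in Hi; lia).
    destruct (i / 2 ^ n) as [|[|]]; try lia;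
    destruct (x / 4 ^ n) as [|[|[|]]]; cbv; ring.
Qed.

Lemma pauli_frob2 n x :
  Rsum (2 ^ n) (fun i => Rsum (2 ^ n) (fun j => Cmod2 (pauli n x i j))) = INR (2 ^ n).
Proof.
  rewrite <- (Rmult_1_r (INR _)), <- Rsum_const.
  apply Rsum_ext. intros. apply pauli_row_norm; auto.
Qed.

End PauliBasis.

(* Product states on (C^D)^(x)k and the cyclic shift of tensor factors.
   [tensor_vec D [f_1; ...; f_k]] is f_1 (x) ... (x) f_k, the first factor
   being the most significant base-D digit of the index.  [shift_mat D B]
   moves the leading C^D factor of C^D (x) C^B to the end. *)
Section ProductStates.
Local Open Scope nat_scope.

Fixpoint tensor_vec (D : nat) (fs : list Vec) : Vec :=
  match fs with
  | nil => fun _ => C1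
  | f :: fs' => fun i => Cmul (f (i / D ^ length fs')) (tensor_vec D fs' (i mod D ^ length fs'))
  end.

Lemma tensor_vec_snoc D fs f i : 0 < D -> i < D ^ S (length fs) ->
  tensor_vec D (fs ++ f :: nil) i = Cmul (tensor_vec D fs (i / D)) (f (i mod D)).
Proof.
  intros HD. revert i. induction fs as [|g fs IH]; intros i Hi.
  - cbn [tensor_vec app length] in *. rewrite Nat.pow_1_r in Hi.
    rewrite ?Nat.pow_0_r, ?Nat.div_1_r, ?Nat.mod_1_r, (Nat.mod_small i D) by lia. cring.
  - cbn [tensor_vec app]. rewrite length_app. simpl length. simpl length in Hi.
    replace (length fs + 1) with (S (length fs)) by lia.
    rewrite IH by (apply Nat.mod_upper_bound; pose proof (pow_pos D (S (length fs)) HD); lia).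
    change (D ^ S (length fs)) with (D * D ^ length fs).
    rewrite mod_mul_div, mod_mul_mod, Nat.Div0.div_div, <- Cmul_assoc by auto. reflexivity.
Qed.

Lemma tensor_vec_norm D fs : 0 < D -> (forall f, In f fs -> vnorm2 D f = 1%R) ->
  vnorm2 (D ^ length fs) (tensor_vec D fs) = 1%R.
Proof.
  intros HD. induction fs as [|f fs IH]; intros H.
  { cbv; ring. }
  unfold vnorm2 in *. simpl length. change (D ^ S (length fs)) with (D * D ^ length fs).
  rewrite Rsum_split. pose proof (pow_pos D (length fs) HD).
  transitivity (Rmult (Rsum D (fun a => Cmod2 (f a)))
                      (Rsum (D ^ length fs) (fun b => Cmod2 (tensor_vec D fs b)))).
  - rewrite Rsum_mul_Rsum. apply Rsum_ext; intros. apply Rsum_ext; intros. simpl.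
    rewrite mixed_div, mixed_mod, Cmod2_mul; auto.
  - rewrite IH, (H f), Rmult_1_r; [reflexivity | simpl; auto | intros; apply H; simpl; auto].
Qed.

Lemma kron_tensor_vec D A f fs i : 0 < D -> i < D * D ^ length fs ->
  Mapply (D * D ^ length fs) (kron (D ^ length fs) A Mid) (tensor_vec D (f :: fs)) i
  = tensor_vec D (Mapply D A f :: fs) i.
Proof. intros HD Hi. apply Mapply_kron_prod; [apply pow_pos; auto | reflexivity]. Qed.

Definition shift_index (D B i : nat) : nat := (i mod D) * B + i / D.
Definition unshift_index (D B i : nat) : nat := (i mod B) * D + i / B.
Definition shift_mat (D B : nat) : Mat := fun i j => Mid j (shift_index D B i).

Lemma shift_index_lt D B i : 0 < D -> i < D * B -> shift_index D B i < D * B.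
Proof.
  intros. unfold shift_index.
  assert (i mod D < D) by (apply Nat.mod_upper_bound; lia).
  assert (i / D < B) by (apply Nat.Div0.div_lt_upper_bound; lia). nia.
Qed.

Lemma unshift_index_lt D B i : 0 < B -> i < D * B -> unshift_index D B i < D * B.
Proof.
  intros. unfold unshift_index.
  assert (i mod B < B) by (apply Nat.mod_upper_bound; lia).
  assert (i / B < D) by (apply Nat.Div0.div_lt_upper_bound; lia). nia.
Qed.

Lemma shift_unshift D B i : 0 < B -> i < D * B -> shift_index D B (unshift_index D B i) = i.
Proof.
  intros. unfold shift_index, unshift_index.
  assert (i / B < D) by (apply Nat.Div0.div_lt_upper_bound; lia).
  rewrite mixed_mod, mixed_div by (auto; apply Nat.mod_upper_bound; lia).
  rewrite Nat.mul_comm. symmetry. apply Nat.div_mod_eq.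
Qed.

Lemma unshift_shift D B i : 0 < D -> i < D * B -> unshift_index D B (shift_index D B i) = i.
Proof.
  intros. unfold shift_index, unshift_index.
  assert (i / D < B) by (apply Nat.Div0.div_lt_upper_bound; lia).
  rewrite mixed_mod, mixed_div by (auto; apply Nat.mod_upper_bound; lia).
  rewrite Nat.mul_comm. symmetry. apply Nat.div_mod_eq.
Qed.

Lemma shift_mat_unitary D B : 0 < D -> 0 < B -> unitary (D * B) (shift_mat D B).
Proof.
  intros HD HB i j Hi Hj. unfold Mmul, Madj, shift_mat.
  transitivity (Csum (D * B) (fun m => Cmul (Mid m (unshift_index D B i)) (Mid j (shift_index D B m)))).
  - apply Csum_ext; intros m Hm. rewrite Cconj_Mid. f_equal. unfold Mid.
    destruct (Nat.eqb_spec i (shift_index D B m)), (Nat.eqb_spec m (unshift_index D B i));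
      subst; auto.
    + exfalso. apply n. rewrite unshift_shift; auto.
    + exfalso. apply n. rewrite shift_unshift; auto.
  - rewrite Csum_delta, shift_unshift by (auto using unshift_index_lt). apply Mid_sym.
Qed.

Lemma shift_mat_apply D B v i : 0 < D -> i < D * B ->
  Mapply (D * B) (shift_mat D B) v i = v (shift_index D B i).
Proof. intros. apply Csum_delta, shift_index_lt; auto. Qed.

Lemma shift_tensor_vec D f fs i : 0 < D -> i < D * D ^ length fs ->
  tensor_vec D (f :: fs) (shift_index D (D ^ length fs) i) = tensor_vec D (fs ++ f :: nil) i.
Proof.
  intros HD Hi. pose proof (pow_pos D (length fs) HD).
  rewrite tensor_vec_snoc by (simpl; auto). simpl. unfold shift_index.
  assert (i / D < D ^ length fs) by (apply Nat.Div0.div_lt_upper_bound; lia).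
  rewrite mixed_div, mixed_mod by (auto; apply Nat.mod_upper_bound; lia). apply Cmul_comm.
Qed.

(* [a * repunit D j] is the index (a, a, ..., a) of (C^D)^(x)j. *)
Fixpoint repunit (D j : nat) : nat :=
  match j with O => O | S j' => D ^ j' + repunit D j' end.

Lemma repunit_spec D j : 0 < D -> (D - 1) * repunit D j + 1 = D ^ j.
Proof.
  intros HD. induction j as [|j IHj]; simpl repunit; [simpl; lia |].
  change (D ^ S j) with (D * D ^ j).
  destruct D; [lia |]. rewrite Nat.sub_succ, Nat.sub_0_r in *. nia.
Qed.

Lemma diag_index_lt D j a : a < D -> a * repunit D j < D ^ j.
Proof. intros. pose proof (repunit_spec D j ltac:(lia)). nia. Qed.

Lemma tensor_power_diag D f j a : a < D ->
  tensor_vec D (repeat f j) (a * repunit D j) = Cpow (f a) j.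
Proof.
  intros Ha. induction j; simpl; auto. rewrite repeat_length.
  replace (a * (D ^ j + repunit D j)) with (a * D ^ j + a * repunit D j) by ring.
  rewrite mixed_div, mixed_mod, IHj by (apply diag_index_lt; auto). reflexivity.
Qed.

End ProductStates.

(* With N = 2^n, let |Phi> = N^(-1/2) sum_a |a>|a> on
   C^N (x) C^N.  The vectors (P_x (x) I)|Phi>, x < 4^n, form an orthonormal
   basis (by Pauli completeness).  The x-th row of [bell_basis n] is the
   conjugate of (P_x (x) I)|Phi>, so applying it and then measuring in the
   standard basis is a Bell-basis measurement; on (U (x) I)|Phi> it yields x
   with probability |<P_x, U>|^2 / N^2, where <A, B> = tr(A^+ B) is the
   Hilbert-Schmidt inner product. *)

Definition hs_inner (N : nat) (A B : Mat) : C :=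
  Csum N (fun i => Csum N (fun j => Cmul (Cconj (A i j)) (B i j))).

Definition bell_state (N : nat) : Vec :=
  fun d => if (d / N =? d mod N)%nat then RtoC (/ sqrt (INR N)) else C0.

Definition bell_basis (n : nat) : Mat := fun x d =>
  Cmul (RtoC (/ sqrt (INR (2 ^ n)))) (Cconj (pauli n x (d / 2 ^ n)%nat (d mod 2 ^ n)%nat)).

Definition choi_amplitudes (n : nat) (U : Mat) : Vec :=
  Mapply (2 ^ n * 2 ^ n)%nat (bell_basis n)
    (Mapply (2 ^ n * 2 ^ n)%nat (kron (2 ^ n) U Mid) (bell_state (2 ^ n))).

Lemma inv_sqrt_sq N : (0 < N)%nat -> / sqrt (INR N) * / sqrt (INR N) = / INR N.
Proof. intros H. pose proof (INR_pos N H). rewrite <- Rinv_mult, sqrt_sqrt; lra. Qed.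

Lemma four_pow n : (2 ^ n * 2 ^ n = 4 ^ n)%nat.
Proof. rewrite <- Nat.pow_mul_l. reflexivity. Qed.

Lemma bell_state_norm N : (0 < N)%nat -> vnorm2 (N * N) (bell_state N) = 1.
Proof.
  intros HN. unfold vnorm2. rewrite Rsum_split.
  rewrite (Rsum_ext _ _ (fun _ => / INR N)).
  { rewrite Rsum_const. pose proof (INR_pos N HN). field. lra. }
  intros a Ha. rewrite <- (Rsum_delta N a (fun _ => / INR N)) by auto.
  apply Rsum_ext. intros b Hb. unfold bell_state.
  rewrite mixed_div, mixed_mod, Nat.eqb_sym by auto.
  destruct (b =? a)%nat; cbv [Cmod2 RtoC C0 fst snd]; [| ring].
  rewrite Rmult_0_r, Rplus_0_r. apply inv_sqrt_sq; auto.
Qed.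

Lemma query_on_bell_state n U d :
  Mapply (2 ^ n * 2 ^ n) (kron (2 ^ n) U Mid) (bell_state (2 ^ n)) d
  = Cmul (U (d / 2 ^ n)%nat (d mod 2 ^ n)%nat) (RtoC (/ sqrt (INR (2 ^ n)))).
Proof.
  pose proof (pow_pos 2 n ltac:(lia)) as HN. set (N := (2 ^ n)%nat) in *.
  assert (Hdm : (d mod N < N)%nat) by (apply Nat.mod_upper_bound; lia).
  unfold Mapply. rewrite Csum_split.
  transitivity (Csum N (fun a => Cmul (Mid a (d mod N))
                  (Cmul (U (d / N)%nat a) (RtoC (/ sqrt (INR N)))))).
  - apply Csum_ext; intros a Ha.
    rewrite (Csum_ext _ _ (fun b => Cmul (Mid (d mod N) b)
               (Cmul (U (d / N)%nat a) (bell_state N (a * N + b)%nat))))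
      by (intros b Hb; unfold kron; rewrite mixed_div, mixed_mod by auto; cring).
    rewrite Csum_delta' by auto. unfold bell_state. rewrite mixed_div, mixed_mod by auto.
    unfold Mid. destruct (a =? d mod N)%nat; cring.
  - apply Csum_delta; auto.
Qed.

Lemma choi_amplitudes_formula n U x :
  choi_amplitudes n U x = Cmul (RtoC (/ INR (2 ^ n))) (hs_inner (2 ^ n) (pauli n x) U).
Proof.
  pose proof (pow_pos 2 n ltac:(lia)) as HN. unfold choi_amplitudes, Mapply at 1.
  rewrite (Csum_ext _ _ (fun d => Cmul (RtoC (/ INR (2 ^ n)))
      (Cmul (Cconj (pauli n x (d / 2 ^ n)%nat (d mod 2 ^ n)%nat)) (U (d / 2 ^ n)%nat (d mod 2 ^ n)%nat)))).
  - rewrite Csum_scal. f_equal. unfold hs_inner. rewrite Csum_split.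
    apply Csum_ext; intros i Hi. apply Csum_ext; intros j Hj. rewrite mixed_div, mixed_mod; auto.
  - intros d Hd. rewrite query_on_bell_state. unfold bell_basis.
    rewrite <- (inv_sqrt_sq (2 ^ n)) by auto. cring.
Qed.

Lemma bell_basis_unitary n : unitary (2 ^ n * 2 ^ n) (bell_basis n).
Proof.
  pose proof (pow_pos 2 n ltac:(lia)) as HN. pose proof (INR_pos _ HN).
  intros d e Hd He. unfold Mmul, Madj, bell_basis. rewrite four_pow.
  rewrite (Csum_ext _ _ (fun x => Cmul (RtoC (/ INR (2 ^ n)))
     (Cmul (Cconj (pauli n x (e / 2 ^ n)%nat (e mod 2 ^ n)%nat)) (pauli n x (d / 2 ^ n)%nat (d mod 2 ^ n)%nat)))).
  - rewrite Csum_scal, pauli_complete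
      by (try apply Nat.mod_upper_bound; try lia; apply Nat.Div0.div_lt_upper_bound; lia).
    rewrite Mid_sym, (Mid_sym (e mod 2 ^ n)%nat), (Mid_divmod _ d e), Cmul_assoc by auto.
    replace (Cmul (RtoC (/ INR (2 ^ n))) (RtoC (INR (2 ^ n)))) with C1
      by (unfold Cmul, C1, RtoC; simpl; f_equal; field; lra).
    apply Cmul_1_l.
  - intros x Hx. rewrite Cconj_mul, Cconj_involutive, <- (inv_sqrt_sq (2 ^ n)) by auto. cring.
Qed.

Lemma choi_amplitudes_norm n U : unitary (2 ^ n) U ->
  Rsum (2 ^ n * 2 ^ n) (fun x => Cmod2 (choi_amplitudes n U x)) = 1.
Proof.
  intros HU. pose proof (pow_pos 2 n ltac:(lia)) as HN.
  change (vnorm2 (2 ^ n * 2 ^ n) (choi_amplitudes n U) = 1). unfold choi_amplitudes.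
  rewrite !unitary_preserves_norm by (apply bell_basis_unitary || apply unitary_kron; auto).
  apply bell_state_norm; auto.
Qed.

(* The register is (C^D)^(x)k with D = N^2, i.e. k blocks, each
   holding a copy of |Phi> (the system being the first C^N of block 0).
   Each round queries U on the leading block, measures that block in the
   Bell basis, and cyclically shifts the blocks so that a fresh copy of
   |Phi> comes to the front.  After k rounds the register holds k
   independent Bell-sampling outcomes; the tester accepts iff they all
   coincide, i.e. iff the index is (a, a, ..., a).  Hence it accepts with
   probability sum_x p_x^k, where p_x = |<P_x, U>|^2 / N^2. *)

Definition bell_round (n B : nat) : Mat :=
  Mmul (2 ^ n * 2 ^ n * B) (shift_mat (2 ^ n * 2 ^ n) B) (kron B (bell_basis n) Mid).

Definition bell_tester (n k : nat) : algorithm :=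
  let D := (2 ^ n * 2 ^ n)%nat in
  let B := (D ^ (k - 1))%nat in
  mkAlg (B * 2 ^ n) k (tensor_vec D (repeat (bell_state (2 ^ n)) k))
    (fun t => match t with O => Mid | S _ => bell_round n B end)
    (fun i => (i mod B =? (i / B) * repunit D (k - 1))%nat).

Section BellTester.
Local Open Scope nat_scope.

Lemma bell_tester_dim n k : 1 <= k ->
  reg_dim n (bell_tester n k) = (2 ^ n * 2 ^ n) * (2 ^ n * 2 ^ n) ^ (k - 1).
Proof. intros. unfold reg_dim; simpl. ring. Qed.

Lemma bell_round_step n U fs i :
  let D := 2 ^ n * 2 ^ n in
  let B := D ^ length fs in
  i < D * B ->
  Mapply (D * B) (bell_round n B)
    (Mapply (D * B) (kron (B * 2 ^ n) U Mid) (tensor_vec D (bell_state (2 ^ n) :: fs))) i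
  = tensor_vec D (fs ++ choi_amplitudes n U :: nil) i.
Proof.
  intros D B Hi. pose proof (pow_pos 2 n ltac:(lia)) as HN.
  assert (HD : 0 < D) by (unfold D; nia).
  assert (HB : 0 < B) by (apply pow_pos; auto).
  unfold bell_round. fold D. rewrite Mapply_Mmul, shift_mat_apply by auto.
  rewrite <- shift_tensor_vec by auto. unfold choi_amplitudes. fold D.
  rewrite <- kron_tensor_vec by (auto; apply shift_index_lt; auto).
  apply Mapply_ext; intros j Hj. rewrite <- kron_tensor_vec by auto.
  apply Mapply_mat_ext; intros. apply kron_Mid_assoc; auto.
Qed.

Lemma bell_tester_state n k U t i : 1 <= k -> t <= k -> i < (2 ^ n * 2 ^ n) ^ k ->
  state_after n (bell_tester n k) U t i =
  tensor_vec (2 ^ n * 2 ^ n)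
    (repeat (bell_state (2 ^ n)) (k - t) ++ repeat (choi_amplitudes n U) t) i.
Proof.
  intros Hk. set (D := 2 ^ n * 2 ^ n). set (B := D ^ (k - 1)).
  assert (HDk : D ^ k = D * B) by (unfold B; replace k with (S (k - 1)) at 1 by lia; reflexivity).
  revert i. induction t; intros i Ht Hi.
  - simpl state_after. rewrite bell_tester_dim by auto. fold D B.
    unfold Mapply. simpl ops. rewrite Csum_delta', Nat.sub_0_r, app_nil_r by lia. reflexivity.
  - set (fs := repeat (bell_state (2 ^ n)) (k - S t) ++ repeat (choi_amplitudes n U) t).
    assert (HB : D ^ length fs = B)
      by (unfold fs, B; rewrite length_app, !repeat_length; f_equal; lia).
    cbn [state_after]. rewrite bell_tester_dim by auto. simpl ops. simpl anc. fold D B.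
    rewrite (Mapply_ext _ _ _ (Mapply (D * B) (kron (B * 2 ^ n) U Mid)
               (tensor_vec D (bell_state (2 ^ n) :: fs)))).
    + pose proof (bell_round_step n U fs i) as Hstep. cbv zeta in Hstep. fold D in Hstep.
      rewrite HB in Hstep. rewrite Hstep by (rewrite <- HDk; auto).
      unfold fs. rewrite <- app_assoc. replace (S t) with (t + 1) by lia.
      rewrite repeat_app. reflexivity.
    + intros j Hj. apply Mapply_ext. intros l Hl. rewrite IHt by lia.
      unfold fs. replace (k - t) with (S (k - S t)) by lia. reflexivity.
Qed.

End BellTester.

Lemma bell_tester_accept n k U : (1 <= k)%nat ->
  accept_prob n (bell_tester n k) U
  = Rsum (2 ^ n * 2 ^ n) (fun x => Cmod2 (choi_amplitudes n U x) ^ k).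
Proof.
  intros Hk. pose proof (pow_pos 2 n ltac:(lia)) as HN.
  set (D := (2 ^ n * 2 ^ n)%nat). set (B := (D ^ (k - 1))%nat).
  assert (HD : (0 < D)%nat) by (unfold D; nia).
  assert (HB : (0 < B)%nat) by (apply pow_pos; auto).
  assert (Hk' : k = S (k - 1)) by lia.
  assert (HDk : (D ^ k = D * B)%nat) by (unfold B; rewrite Hk' at 1; reflexivity).
  unfold accept_prob. rewrite bell_tester_dim by auto. fold D B.
  rewrite Rsum_split. apply Rsum_ext. intros a Ha.
  (* only the diagonal index (a, a, ..., a) is accepted *)
  rewrite <- (Rsum_delta B (a * repunit D (k - 1)) (fun _ => Cmod2 (choi_amplitudes n U a) ^ k))
    by (apply diag_index_lt; auto).
  apply Rsum_ext. intros b Hb. simpl acc. fold D B. rewrite mixed_mod, mixed_div by auto.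
  destruct (b =? a * repunit D (k - 1))%nat eqn:Hdiag; auto.
  apply Nat.eqb_eq in Hdiag. subst b. simpl queries.
  assert (Hidx : (a * B + a * repunit D (k - 1) < D ^ k)%nat).
  { rewrite HDk. nia. }
  rewrite bell_tester_state, Nat.sub_diag by auto.
  rewrite Hk' at 1. simpl app. simpl tensor_vec. rewrite repeat_length. fold B.
  rewrite mixed_mod, mixed_div, Cmod2_mul, tensor_power_diag, Cmod2_pow by auto.
  rewrite Hk' at 2. reflexivity.
Qed.

Lemma bell_tester_well_formed n k : (1 <= k)%nat -> well_formed n (bell_tester n k).
Proof.
  intros Hk. pose proof (pow_pos 2 n ltac:(lia)) as HN.
  set (D := (2 ^ n * 2 ^ n)%nat).
  assert (HD : (0 < D)%nat) by (unfold D; nia).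
  assert (HB : (0 < D ^ (k - 1))%nat) by (apply pow_pos; auto).
  split; [| split].
  - simpl. fold D. nia.
  - rewrite bell_tester_dim by auto. fold D.
    replace (D * D ^ (k - 1))%nat with (D ^ length (repeat (bell_state (2 ^ n)) k))%nat
      by (rewrite repeat_length; replace k with (S (k - 1)) at 1 by lia; reflexivity).
    apply tensor_vec_norm; auto.
    intros f Hf. apply repeat_spec in Hf. subst. apply bell_state_norm; auto.
  - intros t Ht. rewrite bell_tester_dim by auto. destruct t; simpl ops.
    + apply Mid_unitary.
    + apply unitary_Mmul; [apply shift_mat_unitary | apply unitary_kron]; auto.
      apply bell_basis_unitary.
Qed.

Definition accept_all : algorithm :=
  mkAlg 1 0 (fun i => Mid i 0%nat) (fun _ => Mid) (fun _ => true).

Lemma accept_all_spec n U : accept_prob n accept_all U = 1 /\ well_formed n accept_all.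
Proof.
  pose proof (pow_pos 2 n ltac:(lia)) as HN.
  assert (Hnorm : Rsum (reg_dim n accept_all) (fun i => Cmod2 (Mid i 0%nat)) = 1).
  { rewrite <- (Rsum_delta (reg_dim n accept_all) 0 (fun _ => 1))
      by (unfold reg_dim; simpl; lia).
    apply Rsum_ext. intros i _. unfold Mid. destruct (i =? 0)%nat; cbv; ring. }
  split.
  - unfold accept_prob. simpl. rewrite <- Hnorm. apply Rsum_ext. intros i Hi.
    unfold Mapply. rewrite Csum_delta'; auto.
  - split; [simpl; lia | split; [exact Hnorm | intros; apply Mid_unitary]].
Qed.

(* Writing
   p_x = |c_x|^2 with c_x = <P_x, U>/N the Bell-sampling amplitude, one has
   ||e^{it} U - P_x||^2 = 2N (1 - Re(e^{it} c_x)), so the distance from U to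
   the phase class of P_x is governed by |c_x|:
   - if U has the Pauli property then some p_y equals 1;
   - if U is eps-far from P_n then every p_x is at most (1 - eps^2)^2. *)

Lemma hs_inner_self N A : hs_inner N A A = RtoC (Rsum N (fun i => Rsum N (fun j => Cmod2 (A i j)))).
Proof.
  unfold hs_inner. rewrite <- Csum_real. apply Csum_ext; intros.
  rewrite <- Csum_real. apply Csum_ext; intros. apply Cmul_conj_l.
Qed.

Lemma unitary_frob2 N U : unitary N U ->
  Rsum N (fun i => Rsum N (fun j => Cmod2 (U i j))) = INR N.
Proof.
  intros HU.
  assert (H : hs_inner N U U = RtoC (INR N)).
  { unfold hs_inner. rewrite Csum_swap, (Csum_ext _ _ (fun _ => RtoC 1)).
    - rewrite Csum_real, Rsum_const, Rmult_1_r. reflexivity.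
    - intros j Hj. change (Mmul N (Madj U) U j j = RtoC 1).
      rewrite HU by auto. unfold Mid. rewrite Nat.eqb_refl. reflexivity. }
  rewrite hs_inner_self in H. injection H; auto.
Qed.

Lemma frob2_phase_diff N c U V : Cmod2 c = 1 ->
  Rsum N (fun i => Rsum N (fun j => Cmod2 (Msub (Mscale c U) V i j))) =
  Rsum N (fun i => Rsum N (fun j => Cmod2 (U i j)))
  + Rsum N (fun i => Rsum N (fun j => Cmod2 (V i j)))
  - 2 * fst (Cmul c (hs_inner N V U)).
Proof.
  intros Hc. unfold Msub, Mscale.
  rewrite (Rsum_ext _ _ (fun i => Rsum N (fun j => Cmod2 (U i j)) + Rsum N (fun j => Cmod2 (V i j))
             + (-2) * Rsum N (fun j => fst (Cmul c (Cmul (Cconj (V i j)) (U i j)))))).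
  - rewrite !Rsum_add, Rsum_scal. unfold hs_inner. rewrite <- Csum_scal, <- Rsum_fst.
    rewrite (Rsum_ext N (fun i => Rsum N (fun j => fst (Cmul c (Cmul (Cconj (V i j)) (U i j)))))
                        (fun i => fst (Cmul c (Csum N (fun j => Cmul (Cconj (V i j)) (U i j)))))).
    + ring.
    + intros. rewrite <- Csum_scal, <- Rsum_fst. reflexivity.
  - intros i Hi. rewrite <- !Rsum_scal, <- !Rsum_add. apply Rsum_ext; intros j Hj.
    revert Hc. destruct c, (U i j), (V i j). unfold Cmod2, Csub, Cadd, Copp, Cmul, Cconj; simpl.
    intros Hc. nra.
Qed.

Lemma frob_sq d M : frob d M * frob d M = Rsum d (fun i => Rsum d (fun j => Cmod2 (M i j))).
Proof.
  apply sqrt_sqrt, Rsum_nonneg; intros. apply Rsum_nonneg; intros. apply Cmod2_ge0.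
Qed.

Lemma pauli_dist_sq n U x t : unitary (2 ^ n) U ->
  let M := frob (2 ^ n) (Msub (Mscale (Cexpi t) U) (pauli n x)) in
  M * M = 2 * INR (2 ^ n) * (1 - fst (Cmul (Cexpi t) (choi_amplitudes n U x))).
Proof.
  intros HU M. pose proof (INR_pos _ (pow_pos 2 n ltac:(lia))) as HN.
  unfold M. rewrite frob_sq, frob2_phase_diff, unitary_frob2, pauli_frob2 by (auto using Cmod2_Cexpi).
  rewrite choi_amplitudes_formula. destruct (Cexpi t), (hs_inner _ _ _). cbv [Cmul RtoC fst snd].
  field. lra.
Qed.

Lemma far_amplitude_bound n eps U x : unitary (2 ^ n) U -> 0 < eps ->
  eps_far_pauli n eps U -> (x < 4 ^ n)%nat ->
  sqrt (Cmod2 (choi_amplitudes n U x)) <= 1 - eps ^ 2.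
Proof.
  intros HU He Hfar Hx. pose proof (INR_pos _ (pow_pos 2 n ltac:(lia))) as HN.
  destruct (rotate_to_modulus (choi_amplitudes n U x)) as [t Ht].
  specialize (Hfar (pauli n x) (pauli_in_group n x Hx) t).
  pose proof (pauli_dist_sq n U x t HU) as Hdist. cbv zeta in Hdist. rewrite Ht in Hdist.
  set (M := frob (2 ^ n) _) in Hfar, Hdist.
  set (s := sqrt (2 * INR (2 ^ n))) in Hfar.
  assert (Hs : 0 < s) by (apply sqrt_lt_R0; lra).
  assert (Hss : s * s = 2 * INR (2 ^ n)) by (apply sqrt_sqrt; lra).
  (* eps <= M / s, hence eps^2 (2N) <= M^2 = 2N (1 - |c_x|) *)
  assert (HM : eps * s <= M).
  { apply (Rmult_le_compat_r s) in Hfar; [| lra].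
    replace (/ s * M * s) with M in Hfar by (field; lra). exact Hfar. }
  assert (Hsq : eps * s * (eps * s) <= M * M) by (apply Rmult_le_compat; nra).
  replace (eps * s * (eps * s)) with (eps * eps * (s * s)) in Hsq by ring.
  rewrite Hss, Hdist in Hsq. simpl. nra.
Qed.

Lemma far_probability_bound n eps U x : unitary (2 ^ n) U -> 0 < eps ->
  eps_far_pauli n eps U -> (x < 2 ^ n * 2 ^ n)%nat ->
  Cmod2 (choi_amplitudes n U x) <= (1 - eps ^ 2) ^ 2.
Proof.
  intros HU He Hfar Hx. rewrite four_pow in Hx.
  pose proof (far_amplitude_bound n eps U x HU He Hfar Hx) as Hb.
  pose proof (sqrt_pos (Cmod2 (choi_amplitudes n U x))).
  rewrite <- (sqrt_sqrt (Cmod2 _)) by apply Cmod2_ge0. simpl. nra.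
Qed.

(* No unitary is eps-far from P_n when eps >= 1: all amplitudes would
   vanish, contradicting Parseval. *)
Lemma no_far_unitary n eps U : unitary (2 ^ n) U -> 1 <= eps -> ~ eps_far_pauli n eps U.
Proof.
  intros HU He Hfar. pose proof (choi_amplitudes_norm n U HU) as Hp.
  rewrite (Rsum_ext _ _ (fun _ => 0)), Rsum_const in Hp; [lra |].
  intros x Hx. rewrite four_pow in Hx.
  pose proof (far_amplitude_bound n eps U x HU ltac:(lra) Hfar Hx) as Hb.
  pose proof (sqrt_pos (Cmod2 (choi_amplitudes n U x))).
  assert (Hz : sqrt (Cmod2 (choi_amplitudes n U x)) = 0) by (simpl in Hb; nra).
  apply sqrt_eq_0 in Hz; [exact Hz | apply Cmod2_ge0].
Qed.

Lemma pauli_certain_outcome n U : has_pauli_property n U ->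
  exists y, (y < 2 ^ n * 2 ^ n)%nat /\ Cmod2 (choi_amplitudes n U y) = 1.
Proof.
  intros [t [V [[k [l [Hk [Hl HV]]]] HU]]].
  destruct (pauli_tensor_indexed n l Hl) as [Hy HP].
  exists (base4_index l). rewrite four_pow. split; [exact Hy |].
  pose proof (INR_pos _ (pow_pos 2 n ltac:(lia))) as HN.
  set (c := Cmul (Cexpi t) (Cpow Ci k)).
  assert (Hip : hs_inner (2 ^ n) (pauli n (base4_index l)) U
                = Cmul c (hs_inner (2 ^ n) (pauli n (base4_index l)) (pauli n (base4_index l)))).
  { unfold hs_inner. rewrite <- Csum_scal. apply Csum_ext; intros i Hi.
    rewrite <- Csum_scal. apply Csum_ext; intros j Hj.
    rewrite HU, HP by auto. unfold Mscale. rewrite HV by auto. unfold Mscale, c. cring. }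
  rewrite choi_amplitudes_formula, Hip, hs_inner_self, pauli_frob2, !Cmod2_mul.
  unfold c. rewrite Cmod2_mul, Cmod2_Cexpi, Cmod2_Cpow_Ci.
  cbv [Cmod2 RtoC fst snd]. field. lra.
Qed.

(* Completeness: on a unitary with the Pauli property the tester accepts
   with certainty, since one outcome has probability 1. *)
Lemma accept_if_pauli n k U : (1 <= k)%nat -> has_pauli_property n U ->
  1 <= accept_prob n (bell_tester n k) U.
Proof.
  intros Hk Hp. destruct (pauli_certain_outcome n U Hp) as [y [Hy Hy1]].
  rewrite bell_tester_accept by auto.
  rewrite <- (pow1 k), <- Hy1.
  apply (Rsum_ge_term _ (fun x => Cmod2 (choi_amplitudes n U x) ^ k)); auto.
  intros. apply pow_le, Cmod2_ge0.
Qed.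

(* Soundness: on an eps-far unitary, sum_x p_x^k <= (max_x p_x)^(k-1),
   and every p_x is at most (1 - eps^2)^2. *)
Lemma accept_if_far n k eps U : (1 <= k)%nat -> unitary (2 ^ n) U -> 0 < eps ->
  eps_far_pauli n eps U ->
  accept_prob n (bell_tester n k) U <= (1 - eps ^ 2) ^ (2 * (k - 1)).
Proof.
  intros Hk HU He Hfar. rewrite bell_tester_accept by auto.
  rewrite pow_mult. set (b := (1 - eps ^ 2) ^ 2).
  rewrite <- (Rmult_1_r (b ^ (k - 1))), <- (choi_amplitudes_norm n U HU), <- Rsum_scal.
  apply Rsum_le. intros x Hx.
  replace k with (S (k - 1)) at 1 by lia. simpl. rewrite Rmult_comm.
  apply Rmult_le_compat_r; [apply Cmod2_ge0 |].
  apply pow_incr. split; [apply Cmod2_ge0 | apply far_probability_bound; auto].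
Qed.

Lemma bernoulli_bound e j : 0 <= e <= 1 -> (1 - e) ^ j * (1 + INR j * e) <= 1.
Proof.
  intros He. induction j; [simpl; lra |]. rewrite S_INR. simpl pow.
  assert (0 <= (1 - e) ^ j) by (apply pow_le; lra).
  pose proof (pos_INR j).
  assert ((1 - e) * (1 + (INR j + 1) * e) <= 1 + INR j * e) by nra.
  nra.
Qed.

(* With m >= 1/e repetitions, (1 - e)^(2m) <= 1/(1 + 2me) <= 1/3. *)
Lemma repetition_decay e m : 0 <= e <= 1 -> 1 <= INR m * e -> (1 - e) ^ (2 * m) <= 1 / 3.
Proof.
  intros He Hm. pose proof (bernoulli_bound e (2 * m) He) as Hb.
  rewrite mult_INR in Hb. simpl (INR 2) in Hb.
  assert (0 <= (1 - e) ^ (2 * m)) by (apply pow_le; lra).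
  nra.
Qed.

Lemma nat_ceiling r : 0 <= r -> exists m : nat, r <= INR m <= r + 1.
Proof.
  intros Hr. destruct (archimed r) as [Hup1 Hup2].
  assert (Hz : (0 <= up r)%Z) by (apply le_IZR; lra).
  exists (Z.to_nat (up r)). rewrite INR_IZR_INZ, Z2Nat.id by exact Hz. lra.
Qed.

(* The tester with k = ceil(1/eps^2) + 1 queries eps-tests the Pauli group;
   for eps >= 1 no unitary is eps-far and accepting outright suffices. *)
Theorem lemma3 :
  exists K : R, 0 < K /\
    forall (n : nat) (eps : R), (1 <= n)%nat -> 0 < eps ->
      exists a : algorithm,
        well_formed n a /\
        INR (queries a) <= K / (eps ^ 2) /\
        eps_tests_pauli n eps a.
Proof.
  exists 3. split; [lra |]. intros n eps _ He.
  assert (He2 : 0 < eps ^ 2) by (apply pow_lt; auto).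
  destruct (Rle_dec 1 eps) as [Hbig | Hsmall].
  - exists accept_all. destruct (accept_all_spec n Mid) as [_ Hwf].
    split; [exact Hwf | split].
    + simpl. apply Rlt_le, Rdiv_lt_0_compat; lra.
    + intros U HU. destruct (accept_all_spec n U) as [Hacc _]. rewrite Hacc.
      split; [lra | intros Hfar; exfalso; exact (no_far_unitary n eps U HU Hbig Hfar)].
  - assert (He1 : eps ^ 2 < 1) by (simpl; nra).
    destruct (nat_ceiling (/ eps ^ 2)) as [m Hm]; [apply Rlt_le, Rinv_0_lt_compat; auto |].
    assert (Hinv : 1 < / eps ^ 2) by (rewrite <- Rinv_1; apply Rinv_lt_contravar; lra).
    assert (Hme : 1 <= INR m * eps ^ 2)
      by (rewrite <- (Rinv_l (eps ^ 2)) by lra; apply Rmult_le_compat_r; lra).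
    exists (bell_tester n (S m)). split; [apply bell_tester_well_formed; lia | split].
    + simpl queries. rewrite S_INR. unfold Rdiv. lra.
    + intros U HU. split.
      * intros Hp. pose proof (accept_if_pauli n (S m) U ltac:(lia) Hp). lra.
      * intros Hfar. eapply Rle_trans; [apply (accept_if_far n (S m) eps U); auto; lia |].
        rewrite Nat.sub_succ, Nat.sub_0_r. apply repetition_decay; [lra | exact Hme].
Qed.
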